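(* Assume (A1) and (A2'), and let $\alpha\ge\frac12\max\{0,\max_{j\in\Gamma_h}(V(x_j)+\omega)\}+\frac12$. Let $u_h^0\in\mathcal S_{h,p+1}$. Then for every $\tau>0$ and every $n\ge0$ the fully discrete GFALM iterates satisfy $$Q_h(u_h^{n+1})-Q_h(u_h^n)\le-\frac{\tau^2\|\widetilde\mu_h^{n+1}\|_{1,h}^2+4\tau\|\widetilde\mu_h^{n+1}\|_h^2}{2\|\widetilde u_h^{n+1}\|_{h,p+1}^2}.$$
   Context: Fully discrete setting ($d=1$). $\Omega=[x_0,x_0+L]$, $M>0$ even, $h=L/M$, grid $x_j=x_0+jh$, $j\in\Gamma_h=\{0,\dots,M-1\}$, periodic boundary conditions; $X_h=\mathbb R^M$. Let $\varphi_j(x)=\frac1M\sum_{l=-M/2}^{M/2}\frac1{a_l}e^{\mathrm il\sigma(x-x_j)}$ with $a_l=1$ for $|l|<M/2$, $a_l=2$ for $|l|=M/2$, $\sigma=2\pi/L$; $(\mathbf D_{xx})_{j,l}=\varphi_l''(x_j)$ ($-\mathbf D_{xx}$ symmetric positive semidefinite). $\langle u_h,v_h\rangle_h=h\sum_j u_jv_j$, $\|u_h\|_h^2=\langle u_h,u_h\rangle_h$, $|u_h|_{1,h}^2=\langle-\mathbf D_{xx}u_h,u_h\rangle_h$, $\|u_h\|_{1,h}^2=\|u_h\|_h^2+|u_h|_{1,h}^2$, $\|u_h\|_{h,q}=(h\sum_j|u_j|^q)^{1/q}$. With $V_j=V(x_j)$: $Q_h(u_h)=\frac12|u_h|_{1,h}^2+h\sum_jV_j|u_j|^2+\omega\|u_h\|_h^2$;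 $\mathcal S_{h,p+1}=\{u_h:\|u_h\|_{h,p+1}=1\}$; $\widetilde\lambda_h(u_h)=Q_h(u_h)/\|u_h\|_{h,p+1}^{p+1}$. Assumption (A1): $1<p<\infty$, $V\ge0$ bounded. $\lambda_0':=\inf\{\frac12|u_h|_{1,h}^2+h\sum_jV_j|u_j|^2:\|u_h\|_h=1\}$; (A2'): $\omega>-\lambda_0'$. Fully discrete GFALM: for $j\in\Gamma_h$, $\frac1\tau(\widetilde u_j^{n+1}-u_j^n)=-\widetilde\mu_j^{n+1}$, $\widetilde\mu_j^{n+1}=-\frac12(\mathbf D_{xx}\widetilde u_h^{n+1})_j+(V_j+\omega-\widetilde\lambda_h(u_h^n)|u_j^n|^{p-1})u_j^n+\alpha(\widetilde u_j^{n+1}-u_j^n)$, and $u_j^{n+1}=\widetilde u_j^{n+1}/\|\widetilde u_h^{n+1}\|_{h,p+1}$. *)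

From HB Require Import structures.
From mathcomp Require Import all_boot all_order all_algebra.
From mathcomp Require Import all_classical all_reals all_analysis.
Set Implicit Arguments. Unset Strict Implicit. Unset Printing Implicit Defensive.
Import Order.TTheory GRing.Theory Num.Theory.
Local Open Scope ring_scope.
Local Open Scope classical_set_scope.

Section FullyDiscrete.
Variables (R : realType) (x0 L : R) (M : nat).

Definition hstep : R := L / M%:R.
Definition xgrid (j : nat) : R := x0 + j%:R * hstep.
Definition sigma : R := 2 * pi / L.

(* a_l, where the summation index l = i - M/2 runs over -M/2..M/2 (i < M+1) *)
Definition acoef (i : nat) : R := if (i == 0)%N || (i == M)%N then 2 else 1.
Definition lfreq (i : nat) : R := i%:R - (M./2)%:R.

(* phi_j(x) = 1/M sum_{l=-M/2}^{M/2} 1/a_l e^{i l sigma (x - x_j)}; since a_l = a_{-l}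
   the imaginary parts cancel and this is the real function below. *)
Definition phi (j : nat) (x : R) : R :=
  (M%:R)^-1 * \sum_(i < M.+1) (acoef i)^-1 * cos (lfreq i * sigma * (x - xgrid j)).

Definition Dxx (j l : 'I_M) : R := derive1 (derive1 (phi l)) (xgrid j).
Definition Dxx_app (u : 'I_M -> R) (j : 'I_M) : R := \sum_(l < M) Dxx j l * u l.

Definition ip_h (u v : 'I_M -> R) : R := hstep * \sum_(j < M) u j * v j.
Definition nrm2_h (u : 'I_M -> R) : R := ip_h u u.
Definition nrm_h (u : 'I_M -> R) : R := Num.sqrt (nrm2_h u).
Definition semi2_1h (u : 'I_M -> R) : R := ip_h (fun j => - Dxx_app u j) u.
Definition nrm2_1h (u : 'I_M -> R) : R := nrm2_h u + semi2_1h u.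
Definition pnorm_h (q : R) (u : 'I_M -> R) : R :=
  (hstep * \sum_(j < M) `|u j| `^ q) `^ q^-1.

Variables (V : R -> R) (omega p : R).

Definition potE (u : 'I_M -> R) : R := hstep * \sum_(j < M) V (xgrid j) * u j ^+ 2.
Definition Q_h (u : 'I_M -> R) : R := 2^-1 * semi2_1h u + potE u + omega * nrm2_h u.
Definition lam_h (u : 'I_M -> R) : R := Q_h u / (pnorm_h (p + 1) u) `^ (p + 1).

End FullyDiscrete.

Definition lambda0' (R : realType) (x0 L : R) (M : nat) (V : R -> R) : R :=
  inf [set 2^-1 * semi2_1h x0 L u + potE x0 L V u | u in [set u : 'I_M -> R | nrm_h L u = 1]].

From HB Require Import structures.
From mathcomp Require Import all_boot all_order all_algebra.
From mathcomp Require Import all_classical all_reals all_analysis.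
From mathcomp Require Import ring lra.
Set Implicit Arguments. Unset Strict Implicit. Unset Printing Implicit Defensive.
Import Order.TTheory GRing.Theory Num.Theory.
Local Open Scope ring_scope.

(* Write [ut = u - tau mu] and [N = ||ut||_{h,p+1}].  Expanding the quadratic form [Q_h] around
   [u], with the symmetry of [D_xx] and the defining equation of [mu], gives the exact identity
     Q_h(ut) - Q_h(u) + 2 lam tau <|u|^(p-1) u, mu>_h + X / 2
       = tau^2 h sum_j mu_j^2 (V_j + omega - 2 alpha + 1/2),
   where [X] is the numerator of the claimed bound; the choice of [alpha] makes the right-hand side
   nonpositive.  As [||u||_{h,p+1} = 1], [lam = Q_h(u)], and Young's inequality for the exponents
   [p + 1] and [(p + 1) / p] gives [1 - tau <|u|^(p-1) u, mu>_h = <|u|^(p-1) u, ut>_h <= N], hence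
   [1 - 2 tau <|u|^(p-1) u, mu>_h <= N^2].  Since (A2') makes [Q_h] nonnegative, this yields
   [Q_h(ut) - N^2 Q_h(u) <= - X / 2], and dividing by [N^2] is the normalisation [u' = ut / N]. *)

Section Trig.
Variable R : realType.

Lemma is_derive_scale_shift (f : R -> R) (df c a x : R) :
  is_derive (c * (x - a)) 1 f df -> is_derive x 1 (fun y => f (c * (y - a))) (df * c).
Proof.
move=> Hf; apply: (@is_derive1_comp _ f (fun y => c * (y - a))) => //.
have := @is_deriveZ R R R (fun y : R => y - a) c x 1 1.
rewrite /GRing.scale /= mulr1; apply.
by have := @is_deriveB R R R id (cst a) x 1 1 0 _ _; rewrite subr0; apply.
Qed.

Lemma derive1_sum_shift n (f df : R -> R) (k a : R) (w c : 'I_n -> R) :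
  (forall t : R, is_derive t 1 f (df t)) ->
  derive1 (fun y => k * \sum_(i < n) w i * f (c i * (y - a))) =
  fun x => k * \sum_(i < n) (w i * c i) * df (c i * (x - a)).
Proof.
move=> Hf; apply/funext => x; rewrite derive1E; apply: derive_val.
apply: (@is_deriveZ R R R _ k x 1).
have -> : (fun y => \sum_(i < n) w i * f (c i * (y - a))) =
    \sum_(i < n) (fun y => w i * f (c i * (y - a))).
  by apply/funext => y; rewrite fct_sumE.
apply: is_derive_sum => i; rewrite mulrAC -mulrA.
exact: (@is_deriveZ R R R _ (w i) x 1 _ (@is_derive_scale_shift f _ (c i) a x (Hf _))).
Qed.

End Trig.

Section Sym.
Variables (R : realType) (x0 L : R) (M : nat).

Lemma Dxx_cosine (j l : 'I_M) : Dxx x0 L j l =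
  (M%:R)^-1 * \sum_(i < M.+1)
    ((acoef R M i)^-1 * (lfreq R M i * sigma L) * (lfreq R M i * sigma L)) *
    - cos (lfreq R M i * sigma L * (xgrid x0 L M j - xgrid x0 L M l)).
Proof.
rewrite /Dxx /phi (@derive1_sum_shift R _ cos (fun t => - sin t) _ _ _ _ (@is_derive_cos R)).
by rewrite (@derive1_sum_shift R _ (fun t => - sin t) (fun t => - cos t)).
Qed.

Lemma Dxx_sym (j l : 'I_M) : Dxx x0 L j l = Dxx x0 L l j.
Proof.
rewrite !Dxx_cosine; congr (_ * _); apply: eq_bigr => i _.
by rewrite -[xgrid _ _ _ j - _]opprB [_ * - (_ - _)]mulrN cosN.
Qed.
End Sym.

Section Energy.
Variables (R : realType) (x0 L : R) (M : nat) (V : R -> R) (omega : R).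

Local Notation h := (hstep L M).
Local Notation D := (Dxx_app x0 L).
Local Notation W j := (V (xgrid x0 L M j) + omega).

Lemma Dxx_appZ (c : R) (f : 'I_M -> R) (j : 'I_M) :
  D (fun l => c * f l) j = c * D f j.
Proof. by rewrite /Dxx_app mulr_sumr; apply: eq_bigr => l _; ring. Qed.

Lemma Dxx_appB (f g : 'I_M -> R) (j : 'I_M) :
  D (fun l => f l - g l) j = D f j - D g j.
Proof. by rewrite /Dxx_app -sumrB; apply: eq_bigr => l _; ring. Qed.

Lemma sum_Dxx_appC (f g : 'I_M -> R) :
  \sum_j D f j * g j = \sum_j D g j * f j.
Proof.
rewrite /Dxx_app; under eq_bigr do rewrite mulr_suml.
under [RHS]eq_bigr do rewrite mulr_suml.
rewrite exchange_big /=; apply: eq_bigr => l _; apply: eq_bigr => j _.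
by rewrite Dxx_sym; ring.
Qed.

(* One grid point of the energy identity, with [a = (D u)_j] and [b = (D mu)_j]; the
   right-hand side cancels after summation by symmetry of [D]. *)
Lemma energy_identity_pointwise (a b u m w g lam t al : R) :
  m = - 2^-1 * (a - t * b) + (w - lam * g) * u + al * ((u - t * m) - u) ->
  (- 2^-1 * (a - t * b) * (u - t * m) + w * (u - t * m) ^+ 2
     - (- 2^-1 * a * u + w * u ^+ 2))
  + 2 * lam * t * g * u * m
  + (2^-1 * t ^+ 2 * m ^+ 2 - 2^-1 * t ^+ 2 * b * m + 2 * t * m ^+ 2)
  - t ^+ 2 * m ^+ 2 * (w - 2 * al + 2^-1) = 2^-1 * t * (b * u - a * m).
Proof.
move=> Hm.
have -> : a = t * b + 2 * ((w - lam * g) * u - al * t * m - m).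
  have : 2 * m = - (a - t * b) + 2 * ((w - lam * g) * u) + 2 * (al * ((u - t * m) - u)).
    by rewrite {1}Hm; field.
  lra.
by field.
Qed.

Lemma energy_identity (u ut mu g : 'I_M -> R) (lam tau alpha : R) :
  (forall j, ut j = u j - tau * mu j) ->
  (forall j, mu j = - 2^-1 * D ut j + (W j - lam * g j) * u j + alpha * (ut j - u j)) ->
  Q_h x0 L V omega ut - Q_h x0 L V omega u
   + 2 * lam * tau * (h * \sum_j g j * u j * mu j)
   + (tau ^+ 2 * nrm2_1h x0 L mu + 4 * tau * nrm2_h L mu) / 2
  = h * \sum_j tau ^+ 2 * mu j ^+ 2 * (W j - 2 * alpha + 2^-1).
Proof.
move=> Hut; have {Hut} -> : ut = (fun l => u l - tau * mu l).
  by apply/funext => l; exact: Hut.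
have Dut j : D (fun l => u l - tau * mu l) j = D u j - tau * D mu j.
  by rewrite Dxx_appB Dxx_appZ.
move=> Hmu.
have antisym : \sum_j 2^-1 * tau * (D mu j * u j - D u j * mu j) = 0.
  by rewrite -mulr_sumr sumrB sum_Dxx_appC subrr mulr0.
apply/eqP; rewrite -subr_eq0; apply/eqP.
transitivity (h * \sum_j 2^-1 * tau * (D mu j * u j - D u j * mu j));
  last by rewrite antisym mulr0.
rewrite /Q_h /nrm2_1h /semi2_1h /potE /nrm2_h /ip_h.
rewrite !(mulrDr, mulrDl, opprD, mulr_sumr, mulr_suml) -!sumrN -!big_split /=.
apply: eq_bigr => j _; have := Hmu j; rewrite Dut => /energy_identity_pointwise <-.
by field.
Qed.
End Energy.

Section QuadraticForm.
Variables (R : realType) (x0 L : R) (M : nat) (V : R -> R) (omega : R).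

Local Notation h := (hstep L M).
Local Notation D := (Dxx_app x0 L).
Local Notation energy f := (2^-1 * semi2_1h x0 L f + potE x0 L V f).

Lemma nrm2_hZ (c : R) (f : 'I_M -> R) :
  nrm2_h L (fun j => c * f j) = c ^+ 2 * nrm2_h L f.
Proof.
rewrite /nrm2_h /ip_h [RHS]mulrCA [X in _ = _ * X]mulr_sumr.
by congr (_ * _); apply: eq_bigr => j _; ring.
Qed.

Lemma semi2_1hZ (c : R) (f : 'I_M -> R) :
  semi2_1h x0 L (fun j => c * f j) = c ^+ 2 * semi2_1h x0 L f.
Proof.
rewrite /semi2_1h /ip_h [RHS]mulrCA [X in _ = _ * X]mulr_sumr.
by congr (_ * _); apply: eq_bigr => j _; rewrite Dxx_appZ; ring.
Qed.

Lemma potEZ (c : R) (f : 'I_M -> R) :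
  potE x0 L V (fun j => c * f j) = c ^+ 2 * potE x0 L V f.
Proof.
rewrite /potE [RHS]mulrCA [X in _ = _ * X]mulr_sumr.
by congr (_ * _); apply: eq_bigr => j _; ring.
Qed.

Lemma Q_hZ (c : R) (f : 'I_M -> R) :
  Q_h x0 L V omega (fun j => c * f j) = c ^+ 2 * Q_h x0 L V omega f.
Proof. by rewrite /Q_h semi2_1hZ potEZ nrm2_hZ; ring. Qed.

Lemma Q_h_eq0 (f : 'I_M -> R) : (forall j, f j = 0) -> Q_h x0 L V omega f = 0.
Proof.
move=> f0; have -> : f = (fun j => 0 * f j) by apply/funext => j; rewrite f0 mul0r.
by rewrite Q_hZ expr0n mul0r.
Qed.

Hypotheses (L_gt0 : 0 < L) (M_gt0 : (0 < M)%N).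

Lemma hstep_gt0 : 0 < h.
Proof. by rewrite /hstep divr_gt0 // ltr0n. Qed.

Lemma nrm2_h_ge0 (f : 'I_M -> R) : 0 <= nrm2_h L f.
Proof.
rewrite /nrm2_h /ip_h; apply: mulr_ge0; first exact/ltW/hstep_gt0.
by apply: sumr_ge0 => j _; rewrite -expr2 sqr_ge0.
Qed.

Lemma nrm2_h_eq0 (f : 'I_M -> R) : nrm2_h L f = 0 -> forall j, f j = 0.
Proof.
rewrite /nrm2_h /ip_h => /eqP; rewrite mulf_eq0 gt_eqF ?hstep_gt0 //= => /eqP f0 j.
have /eqP : f j * f j = 0.
  by apply: (psumr_eq0P _ f0) => // i _; rewrite -expr2 sqr_ge0.
by rewrite mulf_eq0 orbb => /eqP.
Qed.

Lemma semi2_1h_lbound (v : 'I_M -> R) : nrm2_h L v = 1 ->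
  - \sum_(j < M) \sum_(l < M) `|Dxx x0 L j l| <= semi2_1h x0 L v.
Proof.
rewrite /nrm2_h /ip_h => v1.
have h0 := hstep_gt0.
have hv2_le1 i : h * v i ^+ 2 <= 1.
  rewrite -v1 ler_pM2l // (bigD1 i) //= -expr2 lerDl sumr_ge0 // => j _.
  by rewrite -expr2 sqr_ge0.
rewrite /semi2_1h /ip_h big_distrr /= -sumrN; apply: ler_sum => j _.
have -> : h * (- D v j * v j) = \sum_l - (h * (Dxx x0 L j l * (v l * v j))).
  rewrite /Dxx_app -sumrN big_distrl big_distrr /=.
  by apply: eq_bigr => l _; ring.
rewrite -sumrN; apply: ler_sum => l _; rewrite lerN2.
have hvv_le1 : h * `|v l * v j| <= 1.
  have : 2 * `|v l * v j| <= v l ^+ 2 + v j ^+ 2.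
    rewrite normrM -(real_normK (num_real (v l))) -(real_normK (num_real (v j))).
    have := sqr_ge0 (`|v l| - `|v j|); lra.
  have := hv2_le1 l; have := hv2_le1 j; nra.
have : Dxx x0 L j l * (v l * v j) <= `|Dxx x0 L j l| * `|v l * v j|.
  by rewrite -normrM ler_norm.
have := normr_ge0 (Dxx x0 L j l); have := normr_ge0 (v l * v j); nra.
Qed.

Lemma nrm_h_eq1 (f : 'I_M -> R) : nrm_h L f = 1 -> nrm2_h L f = 1.
Proof. by move=> f1; rewrite -(sqr_sqrtr (nrm2_h_ge0 f)) -/(nrm_h L f) f1 expr1n. Qed.

Hypothesis V_ge0 : forall x, 0 <= V x.

Lemma potE_ge0 (f : 'I_M -> R) : 0 <= potE x0 L V f.
Proof.
apply: mulr_ge0; first exact/ltW/hstep_gt0.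
by apply: sumr_ge0 => j _; rewrite mulr_ge0 // sqr_ge0.
Qed.

(* [inf] of a set that is not bounded below is a junk value, so a lower bound is needed; the
   entrywise bound of [semi2_1h_lbound] is enough. *)
Lemma lambda0'_le_energy (v : 'I_M -> R) :
  nrm_h L v = 1 -> lambda0' x0 L M V <= energy v.
Proof.
move=> v1; apply: ge_inf; last by exists v.
exists (- (2^-1 * \sum_(j < M) \sum_(l < M) `|Dxx x0 L j l|)) => _ [w /nrm_h_eq1 w1 <-].
have := semi2_1h_lbound w1; have := potE_ge0 w; lra.
Qed.

Lemma Q_h_ge_lambda0' (f : 'I_M -> R) :
  (lambda0' x0 L M V + omega) * nrm2_h L f <= Q_h x0 L V omega f.
Proof.
have [f0|f_neq0] := eqVneq (nrm2_h L f) 0.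
  by rewrite f0 mulr0 Q_h_eq0 //; exact: nrm2_h_eq0.
have s_gt0 : 0 < nrm_h L f by rewrite sqrtr_gt0 lt_def f_neq0 nrm2_h_ge0.
have s2 : nrm_h L f ^+ 2 = nrm2_h L f by rewrite sqr_sqrtr // nrm2_h_ge0.
set v := fun j => (nrm_h L f)^-1 * f j.
have v1 : nrm_h L v = 1.
  by rewrite /nrm_h nrm2_hZ -s2 exprVn mulVf ?sqrtr1 // sqrf_eq0 gt_eqF.
have := lambda0'_le_energy v1.
rewrite /v semi2_1hZ potEZ exprVn s2.
have n_gt0 : 0 < nrm2_h L f by rewrite -s2 exprn_gt0.
by rewrite [2^-1 * _]mulrCA -mulrDr ler_pdivlMl // /Q_h mulrDl mulrC lerD2r.
Qed.

Lemma Q_h_ge0 (f : 'I_M -> R) :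
  - lambda0' x0 L M V < omega -> 0 <= Q_h x0 L V omega f.
Proof.
move=> omega_gt; apply: le_trans (Q_h_ge_lambda0' f).
by apply: mulr_ge0; [lra | exact: nrm2_h_ge0].
Qed.

End QuadraticForm.

Section PNorm.
Variables (R : realType) (L : R) (M : nat).
Hypothesis h_gt0 : 0 < hstep L M.

Local Notation h := (hstep L M).
Local Notation pnorm := (pnorm_h L).

Lemma pnorm_h_ge0 (q : R) (f : 'I_M -> R) : 0 <= pnorm q f.
Proof. exact: powR_ge0. Qed.

Lemma pnorm_h_powR (q : R) (f : 'I_M -> R) :
  0 < q -> pnorm q f `^ q = h * \sum_j `|f j| `^ q.
Proof.
move=> q_gt0; rewrite /pnorm_h -powRrM mulVf ?gt_eqF // powRr1 //.
by apply: mulr_ge0; [exact: ltW | apply: sumr_ge0 => j _; exact: powR_ge0].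
Qed.

Lemma pnorm_hZ (q c : R) (f : 'I_M -> R) : 0 < q -> 0 <= c ->
  pnorm q (fun j => c * f j) = c * pnorm q f.
Proof.
move=> q_gt0 c_ge0; rewrite -[LHS]powRr1 ?pnorm_h_ge0 // -(@mulfV _ q) ?gt_eqF //.
rewrite powRrM pnorm_h_powR //.
have -> : h * \sum_j `|c * f j| `^ q = c `^ q * pnorm q f `^ q.
  rewrite pnorm_h_powR // [RHS]mulrCA [X in _ = _ * X]mulr_sumr.
  by congr (_ * _); apply: eq_bigr => j _; rewrite normrM ger0_norm // powRM.
by rewrite -powRM ?pnorm_h_ge0 // -powRrM mulfV ?gt_eqF // powRr1 // mulr_ge0 ?pnorm_h_ge0.
Qed.

Lemma pnorm_h_normalized (q : R) (f : 'I_M -> R) : 0 < q ->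
  (forall j, f j / pnorm q f = 0) \/ pnorm q (fun j => f j / pnorm q f) = 1.
Proof.
move=> q_gt0; have [N0|N_neq0] := eqVneq (pnorm q f) 0.
  by left => j; rewrite N0 invr0 mulr0.
right; under eq_fun do rewrite mulrC.
by rewrite pnorm_hZ ?invr_ge0 ?pnorm_h_ge0 // mulVf.
Qed.

Variable p : R.
Hypothesis p_gt0 : 0 < p.

Lemma powR_norm_mul_self (x : R) : `|x| `^ (p - 1) * x * x = `|x| `^ (p + 1).
Proof.
have -> : `|x| `^ (p - 1) * x * x = `|x| * (`|x| * `|x| `^ (p - 1)).
  by rewrite -mulrA -[x * x]expr2 -real_normK ?num_real //; ring.
rewrite mulr_powRB1 //.
by have := mulr_powRB1 (normr_ge0 x) (addr_gt0 p_gt0 ltr01); rewrite addrK.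
Qed.

Lemma young_powR_pair (a b : R) :
  `|a| `^ (p - 1) * a * b <= `|b| `^ (p + 1) / (p + 1) + `|a| `^ (p + 1) * (p / (p + 1)).
Proof.
have p1_gt0 : 0 < p + 1 by rewrite addr_gt0.
have pq : (p + 1)^-1 + ((p + 1) / p)^-1 = 1.
  by rewrite invf_div -[X in X + _]mul1r -mulrDl addrC divff // gt_eqF.
have q_gt0 : 0 < (p + 1) / p by rewrite divr_gt0.
have := conjugate_powR (normr_ge0 b) (powR_ge0 `|a| p) p1_gt0 q_gt0 pq.
rewrite -powRrM mulrCA divff ?gt_eqF // mulr1 invf_div => young.
apply: le_trans young.
have -> : `|b| * `|a| `^ p = `|a| `^ (p - 1) * `|a * b|.
  by rewrite normrM -mulr_powRB1 //; ring.
by rewrite -mulrA ler_wpM2l ?powR_ge0 // ler_norm.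
Qed.

Lemma pairing_le_pnorm_h (u v : 'I_M -> R) :
  pnorm (p + 1) u = 1 -> 0 < pnorm (p + 1) v ->
  h * \sum_j `|u j| `^ (p - 1) * u j * v j <= pnorm (p + 1) v.
Proof.
move=> u1 N_gt0; set N := pnorm (p + 1) v.
have p1_gt0 : 0 < p + 1 by rewrite addr_gt0.
have vN1 : pnorm (p + 1) (fun j => N^-1 * v j) = 1.
  by rewrite pnorm_hZ ?invr_ge0 ?ltW // mulVf ?gt_eqF.
rewrite -[X in _ <= X]mulr1 -ler_pdivrMl // mulrCA mulr_sumr.
apply: le_trans (_ : h * \sum_j (`|N^-1 * v j| `^ (p + 1) / (p + 1)
   + `|u j| `^ (p + 1) * (p / (p + 1))) <= _).
  rewrite ler_pM2l //; apply: ler_sum => j _.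
  by rewrite mulrCA; exact: young_powR_pair.
rewrite big_split mulrDr -!mulr_suml !mulrA -!pnorm_h_powR // vN1 u1 powR1.
by rewrite -mulrDl mul1r [1 + p]addrC divff ?gt_eqF.
Qed.
End PNorm.

Lemma one_sub_mul2_le_sqr (R : realFieldType) (x y : R) :
  0 <= y -> 1 - x <= y -> 1 - 2 * x <= y ^+ 2.
Proof.
move=> y_ge0 xy; have [x_le1|x_gt1] := lerP x 1; last by have := sqr_ge0 y; lra.
have : (1 - x) ^+ 2 <= y ^+ 2 by rewrite ler_sqr ?nnegrE //; lra.
have := sqr_ge0 x; lra.
Qed.

Section GfalmStep.
Variables (R : realType) (x0 L : R) (M : nat) (V : R -> R) (omega p : R).
Hypotheses (L_gt0 : 0 < L) (M_gt0 : (0 < M)%N) (p_gt0 : 0 < p).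
Hypothesis Q_h_ge0 : forall f : 'I_M -> R, 0 <= Q_h x0 L V omega f.

Local Notation h := (hstep L M).
Local Notation Q := (Q_h x0 L V omega).
Local Notation pnorm := (pnorm_h L (p + 1)).
Local Notation W j := (V (xgrid x0 L M j) + omega).

Let h_gt0 : 0 < h := hstep_gt0 L_gt0 M_gt0.

Lemma lagrange_term_bound (u ut mu : 'I_M -> R) (tau : R) :
  (forall j, u j = 0) \/ pnorm u = 1 ->
  (forall j, ut j = u j - tau * mu j) -> 0 < pnorm ut ->
  Q u - 2 * lam_h x0 L V omega p u * tau * (h * \sum_j `|u j| `^ (p - 1) * u j * mu j)
  <= Q u * pnorm ut ^+ 2.
Proof.
move=> [u0|u1] Hut N_gt0.
  rewrite Q_h_eq0 // big1 => [|j _]; last by rewrite u0 mulr0 mul0r.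
  by rewrite !mulr0 mul0r subr0.
have -> : lam_h x0 L V omega p u = Q u by rewrite /lam_h u1 powR1 divr1.
rewrite -[_ * tau * _]mulrA.
set x := tau * (h * \sum_j `|u j| `^ (p - 1) * u j * mu j).
have pairing : h * \sum_j `|u j| `^ (p - 1) * u j * ut j = 1 - x.
  transitivity (h * \sum_j `|u j| `^ (p + 1) - x);
    last by rewrite -pnorm_h_powR ?addr_gt0 // u1 powR1.
  rewrite /x mulrCA -mulrBr [tau * _]mulr_sumr -sumrB.
  by congr (_ * _); apply: eq_bigr => j _; rewrite Hut -(powR_norm_mul_self p_gt0); ring.
have N_ge : 1 - x <= pnorm ut.
  by rewrite -pairing (pairing_le_pnorm_h h_gt0 p_gt0 u1 N_gt0).
have N2_ge := one_sub_mul2_le_sqr (ltW N_gt0) N_ge.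
have := ler_wpM2l (Q_h_ge0 u) N2_ge; lra.
Qed.

(* The alternative [u = 0] is the iterate produced from [ut = 0], where [ut / 0 = 0]. *)
Lemma gfalm_step_decay (u ut mu : 'I_M -> R) (alpha tau : R) :
  0 < tau -> (forall j : 'I_M, W j <= 2 * alpha - 2^-1) ->
  (forall j, u j = 0) \/ pnorm u = 1 ->
  (forall j, (ut j - u j) / tau = - mu j) ->
  (forall j, mu j = - 2^-1 * Dxx_app x0 L ut j
     + (W j - lam_h x0 L V omega p u * `|u j| `^ (p - 1)) * u j + alpha * (ut j - u j)) ->
  Q (fun j => ut j / pnorm ut) - Q u <=
    - (tau ^+ 2 * nrm2_1h x0 L mu + 4 * tau * nrm2_h L mu) / (2 * pnorm ut ^+ 2).
Proof.
move=> tau_gt0 W_le u_normed Hdiff Hmu.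
have Hut j : ut j = u j - tau * mu j.
  have := congr1 (fun y => y * tau) (Hdiff j); rewrite /= divfK ?gt_eqF //; lra.
set X := tau ^+ 2 * nrm2_1h x0 L mu + 4 * tau * nrm2_h L mu.
have := pnorm_h_ge0 L (p + 1) ut; rewrite le_eqVlt => /orP [/eqP N0|N_gt0].
  rewrite -N0 Q_h_eq0 => [|j]; last by rewrite invr0 mulr0.
  (* both sides are computed with the junk value [x / 0 = 0] *)
  by rewrite expr0n mulr0 invr0 mulr0 sub0r oppr_le0.
have scaled_decay : Q ut - Q u * pnorm ut ^+ 2 <= - X / 2.
  have := energy_identity Hut Hmu.
  have := lagrange_term_bound u_normed Hut N_gt0.
  have : h * \sum_j tau ^+ 2 * mu j ^+ 2 * (W j - 2 * alpha + 2^-1) <= 0.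
    rewrite pmulr_rle0 //; apply: sumr_le0 => j _.
    by apply: mulr_ge0_le0; [rewrite mulr_ge0 ?sqr_ge0 | have := W_le j; lra].
  rewrite /X; lra.
under eq_fun do rewrite mulrC.
have N2_gt0 : 0 < pnorm ut ^+ 2 by rewrite exprn_gt0.
rewrite Q_hZ exprVn (_ : _ - Q u = (Q ut - Q u * pnorm ut ^+ 2) / pnorm ut ^+ 2).
  by rewrite [in Y in _ <= Y]invfM [in Y in _ <= Y]mulrA ler_pM2r ?invr_gt0.
by rewrite mulrBl mulfK ?gt_eqF // mulrC.
Qed.

End GfalmStep.

Theorem mainTheorem15 (R : realType) (x0 L : R) (M : nat)
    (V : R -> R) (omega p alpha tau : R)
    (u ut mu : nat -> 'I_M -> R) :
  0 < L -> (0 < M)%N -> ~~ odd M ->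
  (* (A1) *)
  1 < p -> (forall x, 0 <= V x) -> (exists C : R, forall x, V x <= C) ->
  (* (A2') *)
  omega > - lambda0' x0 L M V ->
  alpha >= 2^-1 * (\big[Num.max/0]_(j < M) (V (xgrid x0 L M j) + omega)) + 2^-1 ->
  0 < tau ->
  (* u_h^0 in S_{h,p+1} *)
  pnorm_h L (p + 1) (u 0%N) = 1 ->
  (* fully discrete GFALM iterates *)
  (forall n j, (ut n.+1 j - u n j) / tau = - mu n.+1 j) ->
  (forall n j, mu n.+1 j =
     - 2^-1 * Dxx_app x0 L (ut n.+1) j
     + (V (xgrid x0 L M j) + omega
        - lam_h x0 L V omega p (u n) * `|u n j| `^ (p - 1)) * u n j
     + alpha * (ut n.+1 j - u n j)) ->
  (forall n j, u n.+1 j = ut n.+1 j / pnorm_h L (p + 1) (ut n.+1)) ->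
  forall n : nat,
    Q_h x0 L V omega (u n.+1) - Q_h x0 L V omega (u n) <=
    - (tau ^+ 2 * nrm2_1h x0 L (mu n.+1) + 4 * tau * nrm2_h L (mu n.+1))
      / (2 * pnorm_h L (p + 1) (ut n.+1) ^+ 2).
Proof.
move=> L_gt0 M_gt0 _ p_gt1 V_ge0 _ omega_gt alpha_ge tau_gt0 u0_normed Hdiff Hmu Hnext.
have p_gt0 : 0 < p by lra.
have u_next n : u n.+1 = fun j => ut n.+1 j / pnorm_h L (p + 1) (ut n.+1).
  by apply/funext => j; exact: Hnext.
have W_le (j : 'I_M) : V (xgrid x0 L M j) + omega <= 2 * alpha - 2^-1.
  by have := le_bigmax 0 (fun j : 'I_M => V (xgrid x0 L M j) + omega) j; lra.
move=> n; rewrite u_next; apply: gfalm_step_decay => //.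
- by move=> f; apply: Q_h_ge0.
- case: n => [|n]; first by right.
  rewrite u_next.
  exact: pnorm_h_normalized (hstep_gt0 L_gt0 M_gt0) (p + 1) (ut n.+1) (addr_gt0 p_gt0 ltr01).
Qed.
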